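(* Let $\sigma : S \to A$ and $\tau : T \to A^\perp$ be two backward sequential strategies, where $A$ is a forest (e.g. obtained from arenas). Then the pullback $S \circledast T$ of $\sigma$ and $\tau$ is backward sequential as well.
   Context: $e \rightarrow e'$ denotes immediate causal dependency ($e<e'$ with nothing strictly between). A strategy $\sigma:S\to A$ between event structures with polarities is a map of esps which is courteous (if $s_1 \rightarrow s_2$ with $\mathrm{pol}(s_1)=+$ or $\mathrm{pol}(s_2)=-$ then $\sigma s_1 \rightarrow \sigma s_2$) and receptive. An event structure $S$ is backward sequential if for every $s\in S$, $[s]=\{s'\mid s'\le s\}$ is a total order. The pullback $S\circledast T$ is the event structure of primes $[(s,t)]_x$ of the product stable family $\mathcal{C}(S)\times\mathcal{C}(T)$ restricted to pairs with $\sigma s=\tau t$; in it, $[(s,t)]_x \rightarrow [(s',t')]_x$ implies $s \rightarrow s'$ or $t \rightarrow t'$. *)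

From Stdlib Require Import List.
Import ListNotations.
Set Implicit Arguments.

(** Event structures with polarity (Winskel-style, consistency on finite sets,
    finite sets represented by lists).  [pol e = true] means positive. *)
Record ESP := {
  ev : Type;
  le : ev -> ev -> Prop;
  con : list ev -> Prop;
  pol : ev -> bool;
  le_refl : forall e, le e e;
  le_trans : forall e1 e2 e3, le e1 e2 -> le e2 e3 -> le e1 e3;
  le_antisym : forall e1 e2, le e1 e2 -> le e2 e1 -> e1 = e2;
  down_finite : forall e, exists l : list ev, forall e', le e' e -> In e' l;
  con_single : forall e, con [e];
  con_sub : forall l l', con l -> incl l' l -> con l';
  con_down : forall l e e', con l -> In e' l -> le e e' -> con (e :: l)
}.

Definition dual (A : ESP) : ESP :=
  {| ev := ev A; le := @le A; con := @con A; pol := fun a => negb (pol A a);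
     le_refl := @le_refl A; le_trans := @le_trans A; le_antisym := @le_antisym A;
     down_finite := @down_finite A; con_single := @con_single A;
     con_sub := @con_sub A; con_down := @con_down A |}.

Definition lt (E : ESP) (e e' : ev E) : Prop := le E e e' /\ e <> e'.
Definition imm (E : ESP) (e e' : ev E) : Prop :=
  lt E e e' /\ ~ (exists e'', lt E e e'' /\ lt E e'' e').

Definition config (E : ESP) (x : ev E -> Prop) : Prop :=
  (exists l : list (ev E), forall e, x e <-> In e l) /\
  (forall e e', x e' -> le E e e' -> x e) /\
  (forall l : list (ev E), (forall e, In e l -> x e) -> con E l).

Definition image (X Y : Type) (f : X -> Y) (x : X -> Prop) : Y -> Prop :=
  fun y => exists u, x u /\ f u = y.

Record Map (E1 E2 : ESP) := {
  fn :> ev E1 -> ev E2;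
  map_config : forall x, config E1 x -> config E2 (image fn x);
  map_locinj : forall x e e', config E1 x -> x e -> x e' -> fn e = fn e' -> e = e';
  map_pol : forall e, pol E2 (fn e) = pol E1 e
}.

Definition courteous (S A : ESP) (sigma : Map S A) : Prop :=
  forall s1 s2, imm S s1 s2 ->
    (pol S s1 = true \/ pol S s2 = false) -> imm A (sigma s1) (sigma s2).

Definition receptive (S A : ESP) (sigma : Map S A) : Prop :=
  forall (x : ev S -> Prop) (a : ev A),
    config S x -> pol A a = false -> ~ image sigma x a ->
    config A (fun a' => image sigma x a' \/ a' = a) ->
    exists s, (~ x s /\ config S (fun s' => x s' \/ s' = s) /\ sigma s = a) /\
      (forall s', ~ x s' /\ config S (fun s'' => x s'' \/ s'' = s') /\ sigma s' = a ->
         s' = s).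

Definition strategy (S A : ESP) (sigma : Map S A) : Prop :=
  courteous sigma /\ receptive sigma.

Definition downsets_total (X : Type) (R : X -> X -> Prop) : Prop :=
  forall s s1 s2, R s1 s -> R s2 s -> R s1 s2 \/ R s2 s1.

Definition backward_sequential (E : ESP) : Prop := downsets_total (@le E).

Definition forest (A : ESP) : Prop := downsets_total (@le A).

(** The pullback: configurations of the product stable family C(S) x C(T)
    restricted to synchronised pairs (sigma s = tau t). *)
Section Pullback.
Variables (A S T : ESP) (sigma : Map S A) (tau : Map T (dual A)).

Definition pb_config (z : ev S * ev T -> Prop) : Prop :=
  (forall p, z p -> sigma (fst p) = tau (snd p)) /\
  config S (image fst z) /\ config T (image snd z) /\
  (forall p q, z p -> z q -> fst p = fst q -> p = q) /\
  (forall p q, z p -> z q -> snd p = snd q -> p = q) /\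
  (* secured: an enumeration of z all of whose prefixes are in the family *)
  (exists l : list (ev S * ev T), NoDup l /\ (forall p, z p <-> In p l) /\
     forall k, config S (image fst (fun p => In p (firstn k l))) /\
               config T (image snd (fun p => In p (firstn k l)))).

Definition prime (z : ev S * ev T -> Prop) (p : ev S * ev T) : ev S * ev T -> Prop :=
  fun q => forall y, pb_config y -> (forall u, y u -> z u) -> y p -> y q.

Definition pb_ev : Type :=
  { P : ev S * ev T -> Prop |
    exists z p, pb_config z /\ z p /\ forall q, P q <-> prime z p q }.

Definition pb_le (P Q : pb_ev) : Prop := forall q, proj1_sig P q -> proj1_sig Q q.

End Pullback.

From Stdlib Require Import List Classical ClassicalEpsilon.
Import ListNotations.
Set Implicit Arguments.
Unset Strict Implicit.

(* An event of the pullback is a prime [p]_z, which is the closure [dcl z p]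
   of p inside z under "lies below in the S- or in the T-component".  Two
   events below [p]_z are closures of points q1, q2 of [p]_z, so it suffices
   to see that reachability totally preorders [p]_z.  Leaving p, the first
   step lands on an immediate predecessor of p in S or in T.  By backward
   sequentiality each component has at most one; when both exist, courtesy
   of the strategy playing the negative move of p sends its predecessor to a
   causal predecessor in A, which the other strategy reflects into its own
   history, so the two predecessors are comparable.  The larger one then
   dominates all of [p]_z except p, and we conclude by induction along a
   securing enumeration of z. *)

Lemma in_firstn (X : Type) k (l : list X) x : In x (firstn k l) -> In x l.
Proof. intro H. rewrite <- (firstn_skipn k l). apply in_or_app. left; exact H. Qed.

Lemma firstn_S_new_unique (X : Type) k (l : list X) x y :
  In x (firstn (S k) l) -> ~ In x (firstn k l) ->
  In y (firstn (S k) l) -> ~ In y (firstn k l) -> x = y.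
Proof.
  revert k; induction l as [|a l IH]; intros k Hx Hx' Hy Hy'; [destruct Hx|].
  destruct k as [|k]; simpl in *.
  - destruct Hx as [<-|[]]; destruct Hy as [<-|[]]; reflexivity.
  - destruct Hx as [<-|Hx]; [exfalso; auto|].
    destruct Hy as [<-|Hy]; [exfalso; auto|].
    exact (IH k Hx (fun H => Hx' (or_intror H)) Hy (fun H => Hy' (or_intror H))).
Qed.

Lemma firstn_filter (X : Type) (f : X -> bool) (l : list X) k :
  exists k0, firstn k (filter f l) = filter f (firstn k0 l).
Proof.
  revert k; induction l as [|a l IH]; intro k.
  - exists 0. destruct k; reflexivity.
  - destruct k as [|k]; [exists 0; reflexivity|].
    simpl. destruct (f a) eqn:Ha.
    + destruct (IH k) as [k0 E]. exists (S k0). simpl. rewrite Ha, E. reflexivity.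
    + destruct (IH (S k)) as [k0 E]. exists (S k0). simpl. rewrite Ha. exact E.
Qed.

Definition bool_of_prop (P : Prop) : bool :=
  if excluded_middle_informative P then true else false.

Lemma In_filter_prop (X : Type) (P : X -> Prop) (l : list X) x :
  In x (filter (fun y => bool_of_prop (P y)) l) <-> In x l /\ P x.
Proof.
  rewrite filter_In. unfold bool_of_prop.
  destruct (excluded_middle_informative (P x)); intuition discriminate.
Qed.

Lemma finite_exists_maximal (X : Type) (R : X -> X -> Prop) (P : X -> Prop) (L : list X) :
  (forall x y z, R x y -> R y z -> R x z) -> (forall x, ~ R x x) ->
  forall x, P x -> (forall y, P y -> R x y -> In y L) ->
  exists m, P m /\ (m = x \/ R x m) /\ ~ (exists y, P y /\ R m y).
Proof.
  intros Htrans Hirr. induction L as [|a L IH]; intros x Hx HL.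
  - exists x. split; [exact Hx|split; [left; reflexivity|]].
    intros [y [Hy Hxy]]. exact (HL y Hy Hxy).
  - destruct (classic (P a /\ R x a)) as [[Ha Hxa]|Hxa].
    + destruct (IH a Ha) as (m & Hm & Ham & Hmax).
      { intros y Hy Hay. destruct (HL y Hy (Htrans _ _ _ Hxa Hay)) as [<-|HyL]; auto.
        destruct (Hirr _ Hay). }
      exists m. split; [exact Hm|split; [|exact Hmax]].
      right. destruct Ham as [<-|Ham]; eauto.
    + apply IH; [exact Hx|]. intros y Hy Hxy.
      destruct (HL y Hy Hxy) as [<-|HyL]; [exfalso; auto|exact HyL].
Qed.

Lemma image_in (X Y : Type) (f : X -> Y) (x : X -> Prop) u : x u -> image f x (f u).
Proof. intro Hu. exists u. split; [exact Hu|reflexivity]. Qed.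

Lemma config_image_down (P : Type) (E : ESP) (g : P -> ev E) (y : P -> Prop) u e :
  config E (image g y) -> y u -> le E e (g u) -> exists v, y v /\ g v = e.
Proof. intros (_ & Hdown & _) Hu Hle. exact (Hdown e (g u) (image_in g Hu) Hle). Qed.

Lemma config_image_sub (P : Type) (E : ESP) (g : P -> ev E) (x y : P -> Prop) (L : list P) :
  config E (image g y) -> (forall u, x u -> y u) ->
  (forall u v, x u -> y v -> le E (g v) (g u) -> x v) ->
  (forall u, x u <-> In u L) -> config E (image g x).
Proof.
  intros Hy Hxy Hclosed HL. split; [|split].
  - exists (map g L). intro e. rewrite in_map_iff. split.
    + intros [u [Hu Hgu]]. exists u. split; [exact Hgu|apply HL, Hu].
    + intros [u [Hgu Hu]]. exists u. split; [apply HL, Hu|exact Hgu].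
  - intros e e' [u [Hu <-]] Hle.
    destruct (config_image_down Hy (Hxy u Hu) Hle) as [v [Hv <-]].
    exact (image_in g (Hclosed u v Hu Hv Hle)).
  - intros l Hl. destruct Hy as (_ & _ & Hcon). apply Hcon.
    intros e He. destruct (Hl e He) as [u [Hu Hgu]]. exists u. auto.
Qed.

Section EventStructures.
Variable E : ESP.

Lemma config_down (e : ev E) : config E (fun e' => le E e' e).
Proof.
  split; [|split].
  - destruct (down_finite E e) as [l Hl].
    exists (filter (fun e' => bool_of_prop (le E e' e)) l). intro e'.
    rewrite In_filter_prop. split; [|tauto]. intro H. split; [apply Hl|]; exact H.
  - intros e1 e2 H12 H2. eapply le_trans; eauto.
  - intros l Hl. apply con_sub with (l ++ [e]); [|intros x Hx; apply in_or_app; auto].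
    induction l as [|x l IH]; simpl; [apply con_single|].
    apply con_down with e.
    + apply IH. intros y Hy. apply Hl. right; exact Hy.
    + apply in_or_app. right; left; reflexivity.
    + apply Hl. left; reflexivity.
Qed.

Lemma lt_trans (e1 e2 e3 : ev E) : lt E e1 e2 -> lt E e2 e3 -> lt E e1 e3.
Proof.
  intros [H12 N12] [H23 N23]. split; [eapply le_trans; eauto|].
  intros <-. apply N23, le_antisym; assumption.
Qed.

Lemma lt_irrefl (e : ev E) : ~ lt E e e.
Proof. intros [_ Hne]. apply Hne; reflexivity. Qed.

Lemma exists_imm_above (e' e : ev E) : lt E e' e -> exists e1, le E e' e1 /\ imm E e1 e.
Proof.
  intro Hlt. destruct (down_finite E e) as [l Hl].
  destruct (@finite_exists_maximal _ (lt E) (fun y => lt E y e) l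
              lt_trans lt_irrefl e' Hlt) as (m & Hm & Hem & Hmax).
  { intros y [Hy _] _. apply Hl, Hy. }
  exists m. split.
  - destruct Hem as [<-|[Hle _]]; [apply le_refl|exact Hle].
  - split; [exact Hm|]. intros (y & Hmy & Hye). apply Hmax. exists y. auto.
Qed.

Hypothesis HE : backward_sequential E.

Lemma le_of_lt_imm (e1 e e' : ev E) : imm E e1 e -> lt E e' e -> le E e' e1.
Proof.
  intros [[Hle1 Hne1] Hno] [Hle Hne].
  destruct (HE Hle Hle1) as [H|H]; [exact H|].
  destruct (classic (e1 = e')) as [->|Hne']; [apply le_refl|].
  exfalso. apply Hno. exists e'. split; split; auto.
Qed.

Lemma imm_pred_unique (e1 e1' e : ev E) : imm E e1 e -> imm E e1' e -> e1 = e1'.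
Proof.
  intros H1 H1'. apply le_antisym.
  - exact (le_of_lt_imm H1' (proj1 H1)).
  - exact (le_of_lt_imm H1 (proj1 H1')).
Qed.

End EventStructures.

Lemma map_le_reflect (E B : ESP) (f : Map E B) (x : ev E -> Prop) e e' :
  config E x -> x e -> x e' -> le B (f e') (f e) -> le E e' e.
Proof.
  intros Hx He He' Hle.
  destruct (config_image_down (map_config f (config_down e)) (le_refl E e) Hle)
    as [e'' [He'' Hf]].
  assert (Hxe'' : x e'') by (destruct Hx as (_ & Hdown & _); exact (Hdown e'' e He He'')).
  rewrite <- (map_locinj f e'' e' Hx Hxe'' He' Hf). exact He''.
Qed.

Lemma le_imm_of_map_lt (E B : ESP) (f : Map E B) (x : ev E -> Prop) e1 e e' :
  backward_sequential E -> config E x -> x e -> x e' ->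
  imm E e1 e -> lt B (f e') (f e) -> le E e' e1.
Proof.
  intros HE Hx He He' Hi [Hle Hne]. apply (le_of_lt_imm HE Hi). split.
  - exact (map_le_reflect Hx He He' Hle).
  - intros Heq. apply Hne. rewrite Heq. reflexivity.
Qed.

Lemma exists_imm_pred_image (P : Type) (E : ESP) (g : P -> ev E) (z : P -> Prop) p w :
  config E (image g z) -> z p -> lt E (g w) (g p) ->
  exists q, z q /\ imm E (g q) (g p) /\ le E (g w) (g q).
Proof.
  intros Hz Hp Hlt. destruct (exists_imm_above Hlt) as [e1 [Hwe1 Hi]].
  destruct (config_image_down Hz Hp (proj1 (proj1 Hi))) as [q [Hq <-]].
  exists q. auto.
Qed.

Section Closure.
Variables S T : ESP.
Implicit Types (z y : ev S * ev T -> Prop) (p q r u v w : ev S * ev T).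

Definition below_either u v := le S (fst u) (fst v) \/ le T (snd u) (snd v).

Inductive dcl z r : ev S * ev T -> Prop :=
  | dcl_refl : dcl z r r
  | dcl_step u v : z u -> dcl z r v -> below_either u v -> dcl z r u.

Definition imm_pred z p q := z q /\ (imm S (fst q) (fst p) \/ imm T (snd q) (snd p)).

Lemma dcl_sub z r u : z r -> dcl z r u -> z u.
Proof. intros Hr H. induction H; assumption. Qed.

Lemma dcl_below z r u : z u -> below_either u r -> dcl z r u.
Proof. intros Hu Hb. exact (dcl_step Hu (dcl_refl z r) Hb). Qed.

Lemma dcl_trans z u v w : dcl z u v -> dcl z v w -> dcl z u w.
Proof. intros Huv Hvw. induction Hvw; [exact Huv|]. eapply dcl_step; eauto. Qed.

Lemma dcl_mono z1 z r : (forall u, dcl z1 r u -> z u) -> forall u, dcl z1 r u -> dcl z r u.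
Proof.
  intros Hsub u H. induction H as [|u v Hu Hv IH Hb]; [apply dcl_refl|].
  exact (dcl_step (Hsub u (dcl_step Hu Hv Hb)) IH Hb).
Qed.

Lemma dcl_least z y r :
  (forall p q, z p -> z q -> fst p = fst q -> p = q) ->
  (forall p q, z p -> z q -> snd p = snd q -> p = q) ->
  (forall u, y u -> z u) -> config S (image fst y) -> config T (image snd y) ->
  y r -> forall u, dcl z r u -> y u.
Proof.
  intros Hinj1 Hinj2 Hyz HyS HyT Hr u H.
  induction H as [|u v Hu _ Hv [Hle|Hle]]; [exact Hr| |].
  - destruct (config_image_down HyS Hv Hle) as [w [Hw Hfw]].
    rewrite (Hinj1 u w Hu (Hyz w Hw) (eq_sym Hfw)). exact Hw.
  - destruct (config_image_down HyT Hv Hle) as [w [Hw Hfw]].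
    rewrite (Hinj2 u w Hu (Hyz w Hw) (eq_sym Hfw)). exact Hw.
Qed.

Lemma dcl_first_step z r u :
  dcl z r u -> u = r \/ exists w, z w /\ below_either w r /\ w <> r /\ dcl z w u.
Proof.
  intro H. induction H as [|u v Hu Hv IH Hb]; [left; reflexivity|].
  destruct IH as [->|(w & Hw & Hwr & Hne & Hwv)].
  - destruct (classic (u = r)) as [->|Hne]; [left; reflexivity|right].
    exists u. repeat split; auto. apply dcl_refl.
  - right. exists w. repeat split; auto. eapply dcl_step; eauto.
Qed.

Lemma imm_pred_dcl z p q : imm_pred z p q -> dcl z p q.
Proof.
  intros [Hq [[[Hle _] _]|[[Hle _] _]]]; apply (dcl_below Hq); [left|right]; exact Hle.
Qed.

Lemma imm_pred_neq z p q : imm_pred z p q -> q <> p.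
Proof. intros [_ [[[_ Hne] _]|[[_ Hne] _]]] ->; apply Hne; reflexivity. Qed.

Lemma config_images_dcl z y r (x : ev S * ev T -> Prop) (L : list (ev S * ev T)) :
  (forall u, y u -> z u) -> config S (image fst y) -> config T (image snd y) ->
  (forall u, x u <-> y u /\ dcl z r u) -> (forall u, x u <-> In u L) ->
  config S (image fst x) /\ config T (image snd x).
Proof.
  intros Hyz HyS HyT Hx HL.
  assert (Hclosed : forall u v, x u -> y v -> below_either v u -> x v).
  { intros u v Hu Hv Hb. apply Hx. split; [exact Hv|].
    exact (dcl_step (Hyz v Hv) (proj2 (proj1 (Hx u) Hu)) Hb). }
  split; apply config_image_sub with (y := y) (L := L); auto.
  - intros u Hu. apply Hx, Hu.
  - intros u v Hu Hv Hle. apply (Hclosed u v Hu Hv). left; exact Hle.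
  - intros u Hu. apply Hx, Hu.
  - intros u v Hu Hv Hle. apply (Hclosed u v Hu Hv). right; exact Hle.
Qed.

End Closure.

Section Interaction.
Variables (A S T : ESP) (sigma : Map S A) (tau : Map T (dual A)).
Implicit Types (z : ev S * ev T -> Prop) (p q r u : ev S * ev T).

Lemma pb_sync z p : pb_config sigma tau z -> z p -> sigma (fst p) = tau (snd p).
Proof. intros (Hsync & _). exact (Hsync p). Qed.

Lemma pb_config_fst z : pb_config sigma tau z -> config S (image fst z).
Proof. intros (_ & H & _). exact H. Qed.

Lemma pb_config_snd z : pb_config sigma tau z -> config T (image snd z).
Proof. intros (_ & _ & H & _). exact H. Qed.

Lemma pb_inj_fst z : pb_config sigma tau z ->
  forall p q, z p -> z q -> fst p = fst q -> p = q.
Proof. intros (_ & _ & _ & H & _). exact H. Qed.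

Lemma pb_inj_snd z : pb_config sigma tau z ->
  forall p q, z p -> z q -> snd p = snd q -> p = q.
Proof. intros (_ & _ & _ & _ & H & _). exact H. Qed.

Lemma pb_config_dcl z r : pb_config sigma tau z -> z r -> pb_config sigma tau (dcl z r).
Proof.
  intros Hz Hr.
  pose proof Hz as (Hsync & HzS & HzT & Hinj1 & Hinj2 & l & Hnd & Hl & Hpre).
  set (f := fun u => bool_of_prop (dcl z r u)).
  assert (Hf : forall L u, In u (filter f L) <-> In u L /\ dcl z r u)
    by (intros; apply In_filter_prop).
  assert (Hdcl : forall u, dcl z r u <-> In u (filter f l)).
  { intro u. rewrite Hf, <- Hl. split; [|tauto].
    intro Hu. split; [exact (dcl_sub Hr Hu)|exact Hu]. }
  destruct (@config_images_dcl _ _ z z r (dcl z r) (filter f l)) as [HS' HT']; auto.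
  { intro u. split; [|tauto]. intro Hu. split; [exact (dcl_sub Hr Hu)|exact Hu]. }
  split; [intros p Hp; exact (Hsync p (dcl_sub Hr Hp))|].
  split; [exact HS'|]. split; [exact HT'|].
  split; [intros p q Hp Hq; exact (Hinj1 p q (dcl_sub Hr Hp) (dcl_sub Hr Hq))|].
  split; [intros p q Hp Hq; exact (Hinj2 p q (dcl_sub Hr Hp) (dcl_sub Hr Hq))|].
  exists (filter f l). split; [exact (NoDup_filter f Hnd)|]. split; [exact Hdcl|].
  intro k. destruct (firstn_filter f l k) as [k0 ->]. destruct (Hpre k0) as [HS0 HT0].
  apply (config_images_dcl (z := z) (y := fun u => In u (firstn k0 l)) (r := r)
           (L := filter f (firstn k0 l))); auto.
  - intros u Hu. apply Hl, (in_firstn Hu).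
  - intro u. reflexivity.
Qed.

Lemma prime_dcl z r u : pb_config sigma tau z -> z r -> prime sigma tau z r u <-> dcl z r u.
Proof.
  intros Hz Hr. split.
  - intro H. apply H; [exact (pb_config_dcl Hz Hr)|exact (fun v => dcl_sub Hr)|apply dcl_refl].
  - intros Hu y Hy Hyz Hyr.
    exact (dcl_least (pb_inj_fst Hz) (pb_inj_snd Hz) Hyz
             (pb_config_fst Hy) (pb_config_snd Hy) Hyr Hu).
Qed.

Lemma pb_ev_dcl (Q : pb_ev sigma tau) z :
  pb_config sigma tau z -> (forall u, proj1_sig Q u -> z u) ->
  exists q, z q /\ forall u, proj1_sig Q u <-> dcl z q u.
Proof.
  destruct Q as [Q (z1 & q & Hz1 & Hq & HQ)]; simpl. intros Hz HQz.
  assert (EQ : forall u, Q u <-> dcl z1 q u) by (intro u; rewrite HQ; exact (prime_dcl u Hz1 Hq)).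
  assert (HQz' : forall u, dcl z1 q u -> z u) by (intros u Hu; apply HQz, EQ, Hu).
  exists q. split; [exact (HQz' q (dcl_refl z1 q))|]. intro u. rewrite EQ. split.
  - exact (@dcl_mono _ _ z1 z q HQz' u).
  - destruct (pb_config_dcl Hz1 Hq) as (_ & HS1 & HT1 & _).
    apply (dcl_least (pb_inj_fst Hz) (pb_inj_snd Hz) HQz' HS1 HT1 (dcl_refl z1 q)).
Qed.

Lemma dcl_imm_pred z p u : pb_config sigma tau z -> z p -> dcl z p u ->
  u = p \/ exists q, imm_pred z p q /\ dcl z q u.
Proof.
  intros Hz Hp Hu.
  destruct (dcl_first_step Hu) as [->|(w & Hw & [Hle|Hle] & Hne & Hwu)];
    [left; reflexivity| right | right].
  - assert (Hlt : lt S (fst w) (fst p))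
      by (split; [exact Hle|]; intro Heq; exact (Hne (pb_inj_fst Hz Hw Hp Heq))).
    destruct (exists_imm_pred_image (pb_config_fst Hz) Hp Hlt) as (q & Hq & Hi & Hwq).
    exists q. split; [split; [exact Hq|left; exact Hi]|].
    exact (dcl_trans (dcl_below Hw (or_introl Hwq)) Hwu).
  - assert (Hlt : lt T (snd w) (snd p))
      by (split; [exact Hle|]; intro Heq; exact (Hne (pb_inj_snd Hz Hw Hp Heq))).
    destruct (exists_imm_pred_image (pb_config_snd Hz) Hp Hlt) as (q & Hq & Hi & Hwq).
    exists q. split; [split; [exact Hq|right; exact Hi]|].
    exact (dcl_trans (dcl_below Hw (or_intror Hwq)) Hwu).
Qed.

Hypotheses (Hsigma : courteous sigma) (Htau : courteous tau).
Hypotheses (HS : backward_sequential S) (HT : backward_sequential T).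

Lemma imm_preds_comparable z p u1 u2 :
  pb_config sigma tau z -> z p -> z u1 -> z u2 ->
  imm S (fst u1) (fst p) -> imm T (snd u2) (snd p) ->
  le S (fst u2) (fst u1) \/ le T (snd u1) (snd u2).
Proof.
  intros Hz Hp Hu1 Hu2 Hi1 Hi2.
  destruct (pol A (sigma (fst p))) eqn:Hpol; [left|right].
  - assert (Hneg : pol T (snd p) = false).
    { rewrite <- (map_pol tau). simpl. rewrite <- (pb_sync Hz Hp), Hpol. reflexivity. }
    apply (le_imm_of_map_lt (f := sigma) HS (pb_config_fst Hz)
             (image_in fst Hp) (image_in fst Hu2) Hi1).
    rewrite (pb_sync Hz Hp), (pb_sync Hz Hu2).
    exact (proj1 (Htau Hi2 (or_intror Hneg))).
  - assert (Hneg : pol S (fst p) = false) by (rewrite <- (map_pol sigma); exact Hpol).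
    apply (le_imm_of_map_lt (f := tau) HT (pb_config_snd Hz)
             (image_in snd Hp) (image_in snd Hu1) Hi2).
    change (lt A (tau (snd u1)) (tau (snd p))).
    rewrite <- (pb_sync Hz Hp), <- (pb_sync Hz Hu1).
    exact (proj1 (Hsigma Hi1 (or_intror Hneg))).
Qed.

Lemma imm_preds_dcl_total z p q1 q2 : pb_config sigma tau z -> z p ->
  imm_pred z p q1 -> imm_pred z p q2 -> dcl z q1 q2 \/ dcl z q2 q1.
Proof.
  intros Hz Hp [Hq1 [Hi1|Hi1]] [Hq2 [Hi2|Hi2]].
  - left. rewrite (pb_inj_fst Hz Hq1 Hq2 (imm_pred_unique HS Hi1 Hi2)). apply dcl_refl.
  - destruct (imm_preds_comparable Hz Hp Hq1 Hq2 Hi1 Hi2) as [H|H];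
      [left|right]; apply dcl_below; auto; [left|right]; exact H.
  - destruct (imm_preds_comparable Hz Hp Hq2 Hq1 Hi2 Hi1) as [H|H];
      [right|left]; apply dcl_below; auto; [left|right]; exact H.
  - left. rewrite (pb_inj_snd Hz Hq1 Hq2 (imm_pred_unique HT Hi1 Hi2)). apply dcl_refl.
Qed.

Lemma dcl_total_prefix z (l : list (ev S * ev T)) :
  pb_config sigma tau z -> (forall u, z u <-> In u l) ->
  (forall k, config S (image fst (fun u => In u (firstn k l))) /\
             config T (image snd (fun u => In u (firstn k l)))) ->
  forall k p, In p (firstn k l) -> forall q1 q2, dcl z p q1 -> dcl z p q2 ->
    dcl z q1 q2 \/ dcl z q2 q1.
Proof.
  intros Hz Hl Hpre k. induction k as [|k IH]; intros p Hp q1 q2 H1 H2; [destruct Hp|].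
  destruct (classic (In p (firstn k l))) as [Hold|Hnew]; [exact (IH p Hold q1 q2 H1 H2)|].
  assert (Hzp : z p) by (apply Hl, (in_firstn Hp)).
  destruct (dcl_imm_pred Hz Hzp H1) as [->|(c1 & Hc1 & Hcq1)]; [left; exact H2|].
  destruct (dcl_imm_pred Hz Hzp H2) as [->|(c2 & Hc2 & Hcq2)]; [right; exact H1|].
  assert (Hc : exists c, imm_pred z p c /\ dcl z c q1 /\ dcl z c q2).
  { destruct (imm_preds_dcl_total Hz Hzp Hc1 Hc2) as [H|H].
    - exists c1. split; [exact Hc1|split; [exact Hcq1|exact (dcl_trans H Hcq2)]].
    - exists c2. split; [exact Hc2|split; [exact (dcl_trans H Hcq1)|exact Hcq2]]. }
  destruct Hc as (c & Hc & Hcq1' & Hcq2').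
  destruct (classic (In c (firstn k l))) as [Hcold|Hcnew]; [exact (IH c Hcold q1 q2 Hcq1' Hcq2')|].
  (* The prefix ending with p is secured, so it contains [dcl z p], hence c;
     as c <> p, c comes before p. *)
  exfalso. apply (imm_pred_neq Hc).
  destruct (Hpre (Datatypes.S k)) as [HS1 HT1].
  assert (Hcin : In c (firstn (Datatypes.S k) l)).
  { apply (dcl_least (pb_inj_fst Hz) (pb_inj_snd Hz)
             (y := fun u => In u (firstn (Datatypes.S k) l))
             (fun u Hu => proj2 (Hl u) (in_firstn Hu)) HS1 HT1 Hp).
    exact (imm_pred_dcl Hc). }
  exact (firstn_S_new_unique Hcin Hcnew Hp Hnew).
Qed.

Lemma dcl_total z p q1 q2 : pb_config sigma tau z -> z p ->
  dcl z p q1 -> dcl z p q2 -> dcl z q1 q2 \/ dcl z q2 q1.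
Proof.
  intros Hz Hp. pose proof Hz as (_ & _ & _ & _ & _ & l & _ & Hl & Hpre).
  apply (dcl_total_prefix Hz Hl Hpre (k := length l)).
  rewrite firstn_all. apply Hl, Hp.
Qed.

End Interaction.

Theorem mainTheorem12 (A S T : ESP) (sigma : Map S A) (tau : Map T (dual A)) :
  forest A ->
  strategy sigma -> strategy tau ->
  backward_sequential S -> backward_sequential T ->
  downsets_total (@pb_le A S T sigma tau).
Proof.
  intros _ [Hsigma _] [Htau _] HS HT P Q1 Q2 HQ1 HQ2.
  destruct (proj2_sig P) as (z & p & Hz & Hp & HP).
  assert (EP : forall u, proj1_sig P u <-> dcl z p u)
    by (intro u; rewrite HP; exact (prime_dcl u Hz Hp)).
  assert (HPz : forall u, proj1_sig P u -> z u)
    by (intros u Hu; exact (dcl_sub Hp (proj1 (EP u) Hu))).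
  destruct (pb_ev_dcl Hz (fun u Hu => HPz u (HQ1 u Hu))) as (q1 & _ & E1).
  destruct (pb_ev_dcl Hz (fun u Hu => HPz u (HQ2 u Hu))) as (q2 & _ & E2).
  assert (Hpq1 : dcl z p q1) by apply EP, HQ1, E1, dcl_refl.
  assert (Hpq2 : dcl z p q2) by apply EP, HQ2, E2, dcl_refl.
  destruct (dcl_total Hsigma Htau HS HT Hz Hp Hpq1 Hpq2) as [H|H].
  - right. intros u Hu. apply E1. exact (dcl_trans H (proj1 (E2 u) Hu)).
  - left. intros u Hu. apply E2. exact (dcl_trans H (proj1 (E1 u) Hu)).
Qed.
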